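(* Let $A,B\in\operatorname{Sym}(n,\mathbb{R})$ with $\operatorname{tr}A=\operatorname{tr}B=0$, and assume $\Gamma_A\subset\Gamma_B$, where $\Gamma_M:=\{z\in\mathbb{R}^n:{}^tzMz\le0\}$. Then there is $c\in\mathbb{R}$ with $B=cA$. *)

From HB Require Import structures.
From mathcomp Require Import all_boot all_order all_algebra.
From mathcomp Require Import reals.
Set Implicit Arguments. Unset Strict Implicit. Unset Printing Implicit Defensive.
Import Order.TTheory GRing.Theory Num.Theory.
Local Open Scope ring_scope.

Definition Gamma (R : realType) (n : nat) (M : 'M[R]_n) : 'cV[R]_n -> Prop :=
  fun z => ((z^T *m M *m z) 0 0 <= 0).

(* Write q_M(z) = tz M z. If q_A takes both signs, then on the plane spanned by
   x and y with q_A(x) < 0 < q_A(y) the form q_A vanishes on two lines x + u y,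
   x + v y with u < 0 < v; these lie in Gamma_A, hence q_B <= 0 there, and an
   affine interpolation gives q_B(x)/q_A(x) >= q_B(y)/q_A(y). A number l between
   these two families of ratios makes l A - B positive semidefinite, and a
   traceless positive semidefinite symmetric matrix is zero. If q_A does not take
   both signs, A is semidefinite and traceless, hence A = 0, so Gamma_A is
   everything and B = 0 by the same argument. *)
From HB Require Import structures.
From mathcomp Require Import all_boot all_order all_algebra.
From mathcomp Require Import reals.
From mathcomp Require Import boolp classical_sets.
From mathcomp Require Import ring lra.
Import Order.TTheory GRing.Theory Num.Theory.
Local Open Scope ring_scope.
Set Implicit Arguments. Unset Strict Implicit.

Section BilinearForm.
Variables (R : comPzRingType) (n : nat).
Implicit Types (M N : 'M[R]_n) (x y z : 'cV[R]_n).

Definition bform M x y := (x^T *m M *m y) 0 0.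

Lemma bformDl M x y z : bform M (x + y) z = bform M x z + bform M y z.
Proof. by rewrite /bform linearD /= !mulmxDl mxE. Qed.

Lemma bformDr M x y z : bform M z (x + y) = bform M z x + bform M z y.
Proof. by rewrite /bform !mulmxDr mxE. Qed.

Lemma bformZl M a x y : bform M (a *: x) y = a * bform M x y.
Proof. by rewrite /bform linearZ /= -!scalemxAl mxE. Qed.

Lemma bformZr M a x y : bform M x (a *: y) = a * bform M x y.
Proof. by rewrite /bform -!scalemxAr mxE. Qed.

Lemma bform_scalem a M x y : bform (a *: M) x y = a * bform M x y.
Proof. by rewrite /bform -scalemxAr -scalemxAl mxE. Qed.

Lemma bform_subm M N x y : bform (M - N) x y = bform M x y - bform N x y.
Proof. by rewrite /bform mulmxBr mulmxBl !mxE. Qed.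

Lemma bform_oppm M x y : bform (- M) x y = - bform M x y.
Proof. by rewrite /bform mulmxN mulNmx mxE. Qed.

Lemma bform0m x y : bform 0 x y = 0.
Proof. by rewrite /bform mulmx0 mul0mx mxE. Qed.

Lemma bformC M x y : M^T = M -> bform M x y = bform M y x.
Proof.
move=> symM; rewrite /bform.
have -> : x^T *m M *m y = (y^T *m M *m x)^T by rewrite !trmx_mul trmxK symM mulmxA.
by rewrite [LHS]mxE.
Qed.

Lemma bform_delta M i j : bform M (delta_mx i 0) (delta_mx j 0) = M i j.
Proof. by rewrite /bform trmx_delta -rowE -colE !mxE. Qed.

Lemma bform_line M x y t : M^T = M ->
  bform M (x + t *: y) (x + t *: y) =
  bform M x x + 2 * t * bform M x y + t ^+ 2 * bform M y y.
Proof. by move=> symM; rewrite !(bformDl, bformDr, bformZl, bformZr) (bformC x y symM); ring. Qed.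

End BilinearForm.

Section TracelessForms.
Variables (R : realFieldType) (n : nat).
Implicit Types (M : 'M[R]_n) (z : 'cV[R]_n).

(* The diagonal entries are q_M(e_i) >= 0 and sum to 0, so they vanish; then
   q_M(e_i + t e_j) = 2 t M i j >= 0 for both signs of t. *)
Lemma psd_trace0_eq0 M : M^T = M -> \tr M = 0 ->
  (forall z, 0 <= bform M z z) -> M = 0.
Proof.
move=> symM trM psdM.
have diag0 i : M i i = 0.
  move: trM => /psumr_eq0P; apply => // j _.
  by rewrite -bform_delta.
apply/matrixP => i j; rewrite mxE.
have offdiag_ge0 t : 0 <= 2 * t * M i j.
  have := psdM (delta_mx i 0 + t *: delta_mx j 0).
  by rewrite bform_line // !bform_delta !diag0; lra.
by have := offdiag_ge0 1; have := offdiag_ge0 (-1); lra.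
Qed.

Lemma nsd_trace0_eq0 M : M^T = M -> \tr M = 0 ->
  (forall z, bform M z z <= 0) -> M = 0.
Proof.
move=> symM trM nsdM; apply: oppr_inj; rewrite oppr0.
apply: psd_trace0_eq0 => [|| z]; first by rewrite linearN /= symM.
  by rewrite linearN /= trM oppr0.
by rewrite bform_oppm oppr_ge0.
Qed.

Lemma trace0_indefinite M : M^T = M -> \tr M = 0 -> M != 0 ->
  (exists x, bform M x x < 0) /\ (exists y, 0 < bform M y y).
Proof.
move=> symM trM /eqP M_neq0; split.
- apply: contrapT => no_neg; apply: M_neq0; apply: psd_trace0_eq0 => // z.
  by rewrite leNgt; apply/negP => neg; apply: no_neg; exists z.
- apply: contrapT => no_pos; apply: M_neq0; apply: nsd_trace0_eq0 => // z.
  by rewrite leNgt; apply/negP => pos; apply: no_pos; exists z.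
Qed.

End TracelessForms.

Lemma quadratic_roots_opposite_sign (R : rcfType) (a b c : R) :
  a < 0 -> 0 < c -> exists u v,
  [/\ u < 0 < v, a + 2 * u * b + u ^+ 2 * c = 0 & a + 2 * v * b + v ^+ 2 * c = 0].
Proof.
move=> a_lt0 c_gt0.
have b2_lt_disc : b ^+ 2 < b ^+ 2 - a * c by nra.
pose s := Num.sqrt (b ^+ 2 - a * c).
have s_ge0 : 0 <= s by exact: sqrtr_ge0.
have s2 : s ^+ 2 = b ^+ 2 - a * c by rewrite sqr_sqrtr // (le_trans (sqr_ge0 b)) ?ltW.
have root w : w ^+ 2 + 2 * b * w + a * c = 0 ->
    a + 2 * (w / c) * b + (w / c) ^+ 2 * c = 0.
  move=> hw; have c_neq0 : c != 0 by rewrite gt_eqF.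
  have -> : a + 2 * (w / c) * b + (w / c) ^+ 2 * c =
    (w ^+ 2 + 2 * b * w + a * c) / c by field.
  by rewrite hw mul0r.
have c_inv_gt0 : 0 < c^-1 by rewrite invr_gt0.
exists ((- b - s) / c), ((- b + s) / c); split.
- by apply/andP; split; [rewrite pmulr_llt0 | rewrite mulr_gt0] => //; nra.
- by apply: root; nra.
- by apply: root; nra.
Qed.

Lemma affine_le0_between (R : realDomainType) (al be u v : R) :
  u < 0 < v -> al + be * u <= 0 -> al + be * v <= 0 -> al <= 0.
Proof.
case/andP=> u_lt0 v_gt0 hu hv.
have : al * (v - u) <= 0.
  have -> : al * (v - u) = v * (al + be * u) + (- u) * (al + be * v) by ring.
  by apply: ler_wnDl; rewrite pmulr_rle0 // oppr_gt0.
by rewrite pmulr_lle0 // subr_gt0 (lt_trans u_lt0).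
Qed.

Section ConeInclusion.
Variables (R : rcfType) (n : nat) (A B : 'M[R]_n).
Hypotheses (symA : A^T = A) (symB : B^T = B).
Hypothesis incl : forall z, bform A z z <= 0 -> bform B z z <= 0.

Lemma cone_incl_cross x y : bform A x x < 0 -> 0 < bform A y y ->
  bform A y y * bform B x x <= bform B y y * bform A x x.
Proof.
move=> ax_lt0 ay_gt0.
have [u [v [uv Au Av]]] := quadratic_roots_opposite_sign (bform A x y) ax_lt0 ay_gt0.
have on_line t : bform A x x + 2 * t * bform A x y + t ^+ 2 * bform A y y = 0 ->
    bform A y y * bform B x x - bform B y y * bform A x x
    + 2 * (bform A y y * bform B x y - bform B y y * bform A x y) * t <= 0.
  move=> At; have := @incl (x + t *: y).
  rewrite !bform_line // At lexx => /(_ isT) Bt.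
  have -> : bform A y y * bform B x x - bform B y y * bform A x x
      + 2 * (bform A y y * bform B x y - bform B y y * bform A x y) * t =
    bform A y y * (bform B x x + 2 * t * bform B x y + t ^+ 2 * bform B y y)
    - bform B y y * (bform A x x + 2 * t * bform A x y + t ^+ 2 * bform A y y)
    by ring.
  by rewrite At mulr0 subr0 pmulr_rle0.
rewrite -subr_le0; apply: affine_le0_between uv _ _; exact: on_line.
Qed.

Lemma cone_incl_ratio_le x y : bform A x x < 0 -> 0 < bform A y y ->
  bform B y y / bform A y y <= bform B x x / bform A x x.
Proof.
move=> ax_lt0 ay_gt0; rewrite ler_pdivrMr // mulrAC ler_ndivlMr //.
by rewrite mulrC cone_incl_cross.
Qed.

End ConeInclusion.

Lemma separating_value (R : realType) (T : Type) (P N : set T) (f : T -> R) :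
  (exists y, P y) -> (exists x, N x) ->
  (forall x y, N x -> P y -> f y <= f x) ->
  exists l, (forall y, P y -> f y <= l) /\ (forall x, N x -> l <= f x).
Proof.
move=> [y0 Py0] [x0 Nx0] fPN.
have ub x : N x -> ubound (f @` P) (f x) by move=> Nx _ [y Py <-]; exact: fPN.
have supP : has_sup (f @` P) by split; [exists (f y0), y0 | exists (f x0); exact: ub].
exists (sup (f @` P)); split=> [y Py|x Nx].
- by apply: sup_upper_bound => //; exists y.
- by apply: ge_sup; [exists (f y0), y0 | exact: ub].
Qed.

Theorem theorem2p2 (R : realType) (n : nat) (A B : 'M[R]_n)
  (symA : A^T = A) (symB : B^T = B)
  (trA : \tr A = 0) (trB : \tr B = 0)
  (incl : forall z : 'cV[R]_n, Gamma A z -> Gamma B z) :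
  exists c : R, B = c *: A.
Proof.
have inclAB z : bform A z z <= 0 -> bform B z z <= 0 by exact: incl.
have [A0 | A_neq0] := eqVneq A 0.
  exists 0; rewrite scale0r; apply: nsd_trace0_eq0 => // z.
  by apply: inclAB; rewrite A0 bform0m.
have [[x ax_lt0] [y ay_gt0]] := trace0_indefinite symA trA A_neq0.
have [l [le_l l_le]] := separating_value (f := fun z => bform B z z / bform A z z)
  (ex_intro (fun z => 0 < bform A z z) y ay_gt0)
  (ex_intro (fun z => bform A z z < 0) x ax_lt0)
  (cone_incl_ratio_le symA symB inclAB).
exists l; apply/esym/eqP; rewrite -subr_eq0; apply/eqP.
apply: psd_trace0_eq0.
- by rewrite linearB /= linearZ /= symA symB.
- by rewrite linearB /= mxtraceZ trA trB mulr0 subr0.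
move=> z; rewrite bform_subm bform_scalem subr_ge0.
have [az_lt0 | az_gt0 | az0] := ltgtP (bform A z z) 0.
- by have := l_le z az_lt0; rewrite ler_ndivlMr // mulrC.
- by have := le_l z az_gt0; rewrite ler_pdivrMr // mulrC.
- by rewrite az0 mulr0 inclAB ?az0.
Qed.
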